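(* Let $\lambda$ be a well-behaved hypergraph width measure, $k$ an integer, and $H$ a hypergraph with $\lambda\text{-}tw(H)\le k$. Then every clique $C$ of $\underline{\underline{H}}$ satisfies $\lambda_H(C)\le k$. Furthermore, every $(A,B)$-separator $S$ of $H$ with $\lambda_H(S)\le k$ is an $(A,B)$-separator in $\underline{\underline{H}}$.
   Context: A hypergraph $H$ has finite vertex set $V(H)$ and edge set $E(H)$ of subsets of $V(H)$; $||H||$ is the size of its encoding. The Gaifman graph $\underline{H}$ is the graph on $V(H)$ with two distinct vertices adjacent iff they lie in a common edge; $N_G(u)$ is the neighbourhood of $u$ in a graph $G$. The graph $\underline{\underline{H}}$ (depending on $k$) is obtained from $G_0=\underline{H}$ by repeatedly adding to the current graph $G_i$ an edge $uv$ between non-adjacent vertices with $\lambda_H(N_{G_i}(u)\cap N_{G_i}(v))>k$, until no such pair remains (in any order, e.g. lexicographically first). A set $S$ is an $(A,B)$-separator in a graph $G$ (of $H$: in $\underline{H}$) if $A\cap B\subseteq S$ and every path in $G$ from a vertex of $A$ to a vertex of $B$ contains a vertex of $S$. A tree decomposition of $H$ is a tree $T$ with bags $B_t\subseteq V(H)$ such that nodes containing a given vertex form a connected subtree and every edge of $\underline{H}$ is inside some bag. A width measure $\lambda$ assigns to each hypergraph $H$ a real function $\lambda_H$ on subsets of $V(H)$; $\lambda\text{-}tw(H)$ is the minimum over tree decompositions of $\max_t\lambda_H(B_t)$. $\lambda$ is well-behaved if: (1) $\lambda_H(\{x\})\ge1$; (2) $\lambda_H(S\cup T)\le\lambda_H(S)+\lambda_H(T)$;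 (3) equality in (2) for disjoint $S,T$ with no edge of $\underline{H}$ between them; (4) $\lambda_F(S)\le\lambda_H(T)$ whenever $V(H)\subseteq V(F)$, $E(H)\subseteq E(F)$ and $S\subseteq T$; (5) $\lambda_H(S)\le k$ is decidable in time $||H||^{O(k)}$. *)

From mathcomp Require Import all_boot all_order all_algebra.
Set Implicit Arguments. Unset Strict Implicit. Unset Printing Implicit Defensive.
Import Order.TTheory GRing.Theory Num.Theory.
Local Open Scope ring_scope.

Record hypergraph (T : finType) := Hypergraph {
  hv : {set T};
  he : {set {set T}}
}.

Definition wf_hg (T : finType) (H : hypergraph T) : Prop :=
  forall e, e \in he H -> e \subset hv H.

Definition gaifman (T : finType) (H : hypergraph T) : rel T :=
  [rel u v | (u != v) && [exists e, (e \in he H) && (u \in e) && (v \in e)]].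

Definition width_measure (T : finType) (R : realFieldType) :=
  hypergraph T -> {set T} -> R.

Definition well_behaved (T : finType) (R : realFieldType)
    (lam : width_measure T R) : Prop :=
  (forall H, wf_hg H -> forall x, x \in hv H -> 1 <= lam H [set x]) /\
  (forall H, wf_hg H -> forall S U : {set T}, S \subset hv H -> U \subset hv H ->
     lam H (S :|: U) <= lam H S + lam H U) /\
  (forall H, wf_hg H -> forall S U : {set T}, S \subset hv H -> U \subset hv H ->
     [disjoint S & U] ->
     (forall x y, x \in S -> y \in U -> ~~ gaifman H x y) ->
     lam H (S :|: U) = lam H S + lam H U) /\
  (forall F H, wf_hg F -> wf_hg H -> hv H \subset hv F -> he H \subset he F ->
     forall S U : {set T}, S \subset U -> U \subset hv H -> lam F S <= lam H U).

Definition is_tree (n : nat) (tr : rel 'I_n) : Prop :=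
  (0 < n)%N /\ irreflexive tr /\ symmetric tr /\
  (forall x y, connect tr x y) /\
  #|[set p : 'I_n * 'I_n | tr p.1 p.2]| = (2 * (n - 1))%N.

Definition tree_decomposition (T : finType) (H : hypergraph T)
    (n : nat) (tr : rel 'I_n) (B : 'I_n -> {set T}) : Prop :=
  is_tree tr /\
  (forall t, B t \subset hv H) /\
  (forall v, v \in hv H -> exists t, v \in B t) /\
  (forall v t1 t2, v \in B t1 -> v \in B t2 ->
     connect [rel x y | tr x y && (v \in B x) && (v \in B y)] t1 t2) /\
  (forall u v, gaifman H u v -> exists t, (u \in B t) && (v \in B t)).

Definition lam_tw_le (T : finType) (R : realFieldType) (lam : width_measure T R)
    (H : hypergraph T) (k : int) : Prop :=
  exists n (tr : rel 'I_n) (B : 'I_n -> {set T}),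
    tree_decomposition H tr B /\ forall t, lam H (B t) <= k%:~R.

Definition nbh (T : finType) (G : rel T) (u : T) : {set T} := [set w | G u w].

Definition add_edge (T : finType) (G : rel T) (u v : T) : rel T :=
  [rel x y | G x y || ((x == u) && (y == v)) || ((x == v) && (y == u))].

Definition can_add (T : finType) (R : realFieldType) (lam : width_measure T R)
    (H : hypergraph T) (k : int) (G : rel T) (u v : T) : Prop :=
  [/\ u \in hv H, v \in hv H, u != v, ~~ G u v &
      k%:~R < lam H (nbh G u :&: nbh G v)].

Inductive closure_seq (T : finType) (R : realFieldType) (lam : width_measure T R)
    (H : hypergraph T) (k : int) : rel T -> Prop :=
| cl_start : closure_seq lam H k (gaifman H)
| cl_step G u v : closure_seq lam H k G -> can_add lam H k G u v ->
    closure_seq lam H k (add_edge G u v).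

(* G is a result of the closure process (any order): reachable and saturated. *)
Definition is_closure (T : finType) (R : realFieldType) (lam : width_measure T R)
    (H : hypergraph T) (k : int) (G : rel T) : Prop :=
  closure_seq lam H k G /\ forall u v, ~ can_add lam H k G u v.

Definition is_clique (T : finType) (H : hypergraph T) (G : rel T) (C : {set T}) : Prop :=
  C \subset hv H /\ forall u v, u \in C -> v \in C -> u != v -> G u v.

Definition separator (T : finType) (G : rel T) (A B S : {set T}) : Prop :=
  A :&: B \subset S /\
  forall a p, a \in A -> path G a p -> last a p \in B -> has (mem S) (a :: p).

From mathcomp Require Import all_boot all_order all_algebra.
From mathcomp Require Import zify.

(* Both assertions are invariants of the closure process, checked one added
   edge at a time.
   Cliques: the node sets {t | v \in B t} of a tree decomposition are subtrees,
   and subtrees of a tree have the Helly property, so it suffices that every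
   edge of every intermediate graph lies in some bag. When uv is added and u, v
   shared no bag, Helly for the subtrees of u, w and (v together with w') shows
   that any two common neighbours w, w' share a bag; by Helly again N(u) :&: N(v)
   lies in a single bag, contradicting lam (N(u) :&: N(v)) > k.
   Separators: an added edge uv with u, v outside S is already bridged by a path
   u w v avoiding S, because lam (N(u) :&: N(v)) > k >= lam S rules out
   N(u) :&: N(v) \subset S.
   The Helly property is proved by induction, contracting a leaf of the tree
   onto its neighbour. *)

Import Order.TTheory GRing.Theory Num.Theory.

Set Implicit Arguments. Unset Strict Implicit.

Lemma connect_homo (U W : finType) (e : rel U) (e' : rel W) (f : U -> W) :
  (forall x y, e x y -> connect e' (f x) (f y)) ->
  forall x y, connect e x y -> connect e' (f x) (f y).
Proof.
move=> homo_f x _ /connectP[p + ->]; elim: p x => [|z p IH] x /=.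
  by rewrite connect0.
by case/andP=> /homo_f exz /IH; apply: connect_trans.
Qed.

Section SubtreeHelly.

Variables (V : finType) (tr : rel V).
Hypotheses (tr_irr : irreflexive tr) (tr_sym : symmetric tr).

Definition induced (X : {set V}) : rel V :=
  [rel x y | tr x y && (x \in X) && (y \in X)].

Definition connected_set (X : {set V}) :=
  {in X &, forall x y, connect (induced X) x y}.

Definition neighbours (N : {set V}) x := [set y in N | tr x y].

Definition arcs (N : {set V}) :=
  [set a : V * V | tr a.1 a.2 && (a.1 \in N) && (a.2 \in N)].

(* As in [is_tree], every edge is counted once in each direction. *)
Definition tree_on (N : {set V}) :=
  connected_set N /\ #|arcs N| = 2 * (#|N| - 1).

Lemma connect_inducedS (X Y : {set V}) x y :
  X \subset Y -> connect (induced X) x y -> connect (induced Y) x y.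
Proof.
move=> sXY; apply: connect_sub => {}x {}y /andP[/andP[txy xX] yX].
by apply: connect1; rewrite /induced /= txy !(subsetP sXY).
Qed.

Lemma connected_setU (X Y : {set V}) :
  connected_set X -> connected_set Y -> X :&: Y != set0 -> connected_set (X :|: Y).
Proof.
move=> cX cY /set0Pn[z /setIP[zX zY]].
have cXU x y : x \in X -> y \in X -> connect (induced (X :|: Y)) x y.
  by move=> xX yX; apply: connect_inducedS (subsetUl X Y) (cX x y xX yX).
have cYU x y : x \in Y -> y \in Y -> connect (induced (X :|: Y)) x y.
  by move=> xY yY; apply: connect_inducedS (subsetUr X Y) (cY x y xY yY).
move=> x y /setUP[xX|xY] /setUP[yX|yY]; first exact: cXU.
- exact: connect_trans (cXU x z xX zX) (cYU z y zY yY).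
- exact: connect_trans (cYU x z xY zY) (cXU z y zX yX).
exact: cYU.
Qed.

Lemma connected_neighbours (X : {set V}) x y :
  connected_set X -> x \in X -> y \in X -> x != y -> neighbours X x != set0.
Proof.
move=> cX xX yX; case/connectP: (cX x y xX yX) => [[|z p]] /=; first by move=> _ ->; rewrite eqxx.
by case/andP=> /andP[/andP[txz _] zX] _ _ _; apply/set0Pn; exists z; rewrite inE zX.
Qed.

Lemma card_arcs (N : {set V}) :
  #|arcs N| = \sum_(x in N) #|neighbours N x|.
Proof.
rewrite -sum1dep_card.
transitivity (\sum_(a : V * V | (a.1 \in N) && ((a.2 \in N) && tr a.1 a.2)) 1).
  by apply: eq_bigl => -[x y]; rewrite /= -andbA andbC -andbA.
rewrite -(pair_big_dep (mem N) (fun x y => (y \in N) && tr x y) (fun _ _ => 1)).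
by apply: eq_bigr => x _; rewrite sum1dep_card.
Qed.

Lemma tree_leaf (N : {set V}) :
  tree_on N -> 1 < #|N| -> exists l p, l \in N /\ neighbours N l = [set p].
Proof.
move=> [cN arcsN] N2.
have [l lN degl] : exists2 l, l \in N & #|neighbours N l| < 2.
  apply/exists_inP; apply: contraLR N2; rewrite negb_exists_in => /forall_inP deg2.
  have : \sum_(x in N) 2 <= #|arcs N|.
    by rewrite card_arcs; apply: leq_sum => x /deg2; rewrite -leqNgt.
  by rewrite sum_nat_const arcsN; lia.
have [z zN lz] : exists2 z, z \in N & l != z.
  case/card_gt1P: N2 => x [y [xN yN xy]].
  by case: (eqVneq l x) => [lx|]; [exists y; rewrite // lx | exists x].
have /set0Pn[p pl] := connected_neighbours cN lN zN lz.
have /cards1P[q Nl] : #|neighbours N l| == 1.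
  by rewrite eqn_leq -ltnS degl card_gt0; apply/set0Pn; exists p.
by exists l, q.
Qed.

Definition contract (l p x : V) := if x == l then p else x.

Lemma connected_contract (N X : {set V}) l p :
  neighbours N l = [set p] -> X \subset N -> connected_set X ->
  connected_set (contract l p @: X).
Proof.
move=> Nl sXN cX _ _ /imsetP[x xX ->] /imsetP[y yX ->].
have nbl z : z \in X -> tr l z -> z = p.
  by move=> zX tlz; apply/set1P; rewrite -Nl inE (subsetP sXN) ?tlz.
apply: connect_homo (cX x y xX yX) => {xX yX} {}x {}y /andP[/andP[txy xX] yX].
rewrite /contract; case: (eqVneq x l) => [xl|xl]; case: (eqVneq y l) => [yl|yl].
- by rewrite connect0.
- by rewrite (nbl y yX) -?xl ?connect0.
- by rewrite (nbl x xX) -?yl 1?tr_sym ?connect0.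
have fixed z : z \in X -> z != l -> z \in contract l p @: X.
  by move=> zX zl; apply/imsetP; exists z; rewrite // /contract (negbTE zl).
by apply: connect1; rewrite /induced /= txy !fixed.
Qed.

Section Leaf.

Variables (N : {set V}) (l p : V).
Hypotheses (lN : l \in N) (Nl : neighbours N l = [set p]).

Lemma leaf_neighbour : [/\ p \in N, tr l p & p != l].
Proof.
have : p \in neighbours N l by rewrite Nl set11.
rewrite inE => /andP[pN tlp]; split=> //.
by apply: contraTneq tlp => ->; rewrite tr_irr.
Qed.

Lemma contract_leaf : contract l p @: N = N :\ l.
Proof.
have [pN _ pl] := leaf_neighbour.
apply/setP => x; rewrite !inE; apply/imsetP/andP => [[y yN ->]|[xl xN]].
  by rewrite /contract; case: (eqVneq y l) => [_|yl]; [rewrite pl pN | rewrite yl yN].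
by exists x; rewrite // /contract (negbTE xl).
Qed.

Lemma tree_on_delete_leaf : tree_on N -> tree_on (N :\ l).
Proof.
case=> cN arcsN; split.
  by rewrite -contract_leaf; apply: connected_contract Nl (subxx N) cN.
have [pN tlp pl] := leaf_neighbour.
have nbl z : z \in N -> tr l z -> z = p by move=> zN tlz; apply/set1P; rewrite -Nl inE zN.
have arcsD : arcs (N :\ l) = arcs N :\ (l, p) :\ (p, l).
  apply/setP => -[x y]; rewrite !inE /= !xpair_eqE.
  case: (eqVneq x l) => [->|xl]; case: (eqVneq y l) => [->|yl];
    rewrite ?tr_irr ?eqxx ?andbT ?andbF ?andFb //=.
    by apply/esym/and3P => -[ynp /andP[tly _] /nbl/(_ tly) yp]; rewrite yp eqxx in ynp.
  rewrite tr_sym; case: (boolP (tr l x)) => [tlx|_]; last by rewrite andbF.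
  by apply/esym/and3P => -[xnp /nbl/(_ tlx) xp _]; rewrite xp eqxx in xnp.
have lp_arc : (l, p) \in arcs N by rewrite inE /= tlp lN pN.
have pl_arc : (p, l) \in arcs N :\ (l, p).
  by rewrite !inE /= xpair_eqE (negbTE pl) tr_sym tlp lN pN.
move: arcsN; rewrite arcsD (cardsD1 (l, p)) lp_arc (cardsD1 (p, l) (arcs N :\ (l, p))) pl_arc.
by rewrite (cardsD1 l N) lN; lia.
Qed.

End Leaf.

Lemma subtree_helly (I : finType) (N : {set V}) (X : I -> {set V}) :
  tree_on N -> N != set0 -> (forall i, X i \subset N) -> (forall i, connected_set (X i)) ->
  (forall i j, X i :&: X j != set0) -> exists2 t, t \in N & forall i, t \in X i.
Proof.
move: {2}#|N| (leqnn #|N|) => m; elim: m N X => [|m IH] N X.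
  by rewrite leqn0 cards_eq0 => /eqP-> _ /eqP.
move=> leNm treeN N0 sXN cX meetX.
have [N1|N2] := leqP #|N| 1.
  have /cards1P[t Nt] : #|N| == 1 by rewrite eqn_leq N1 card_gt0.
  exists t => [|i]; first by rewrite Nt set11.
  have /set0Pn[x] := meetX i i; rewrite setIid => xi.
  by have := subsetP (sXN i) x xi; rewrite Nt => /set1P <-.
have [l [p [lN Nl]]] := tree_leaf treeN N2.
have [pN _ pl] := leaf_neighbour Nl.
have [t] : exists2 t, t \in N :\ l & forall i, t \in contract l p @: X i.
  apply: IH => [|||i|i|i j].
  - by move: leNm; rewrite (cardsD1 l N) lN.
  - exact: tree_on_delete_leaf lN Nl treeN.
  - by apply/set0Pn; exists p; rewrite !inE pl pN.
  - by rewrite -(contract_leaf Nl); apply: imsetS.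
  - exact: connected_contract Nl (sXN i) (cX i).
  have /set0Pn[z /setIP[zi zj]] := meetX i j.
  by apply/set0Pn; exists (contract l p z); rewrite inE !imset_f.
have only_l i : l \in X i -> p \notin X i -> X i = [set l].
  move=> li pi; apply/eqP; rewrite eqEsubset sub1set li andbT; apply/subsetP => z zi.
  apply/set1P; apply: contraNeq pi; rewrite eq_sym => lz.
  have /set0Pn[q] := connected_neighbours (cX i) li zi lz.
  rewrite inE => /andP[qi tlq].
  by have /set1P<- : q \in [set p] by rewrite -Nl inE tlq (subsetP (sXN i)).
rewrite inE => /andP[tl tN] tX.
case: (eqVneq t p) => [tp|tp]; last first.
  exists t => // i; have /imsetP[z zi tz] := tX i.
  by move: tz; rewrite /contract; case: (eqVneq z l) => [_ /eqP|_ ->]; rewrite ?(negbTE tp).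
have [/forallP pX|/forallPn[i0 pi0]] := boolP [forall i, p \in X i]; first by exists p.
have li0 : l \in X i0.
  have /imsetP[z zi0] := tX i0; rewrite tp /contract.
  by case: (eqVneq z l) => [<-|_ zp] //; rewrite zp zi0 in pi0.
exists l => // j; have /set0Pn[z /setIP[zj]] := meetX j i0.
by rewrite (only_l i0 li0 pi0) => /set1P zl; rewrite -zl.
Qed.

Lemma subtree_helly3 (N X Y Z : {set V}) :
  tree_on N -> X \subset N -> Y \subset N -> Z \subset N ->
  connected_set X -> connected_set Y -> connected_set Z ->
  X :&: Y != set0 -> X :&: Z != set0 -> Y :&: Z != set0 -> X :&: Y :&: Z != set0.
Proof.
move=> treeN sXN sYN sZN cX cY cZ XY XZ YZ.
pose W (i : 'I_3) := nth set0 [:: X; Y; Z] i.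
have X0 : X != set0 by apply: contraNneq XY => ->; rewrite set0I.
have Y0 : Y != set0 by apply: contraNneq XY => ->; rewrite setI0.
have Z0 : Z != set0 by apply: contraNneq XZ => ->; rewrite setI0.
have N0 : N != set0 by apply: contraNneq X0 => N0; rewrite -subset0 -N0.
have [|||t _ tW] := subtree_helly (X := W) treeN N0.
- by case=> [[|[|[|]]]].
- by case=> [[|[|[|]]]].
- by case=> [[|[|[|i]]] ?] [[|[|[|j]]] ?] //=; rewrite /W /= ?setIid // setIC.
by apply/set0Pn; exists t; rewrite !inE (tW ord0) (tW (@Ordinal 3 1 isT)) (tW (@Ordinal 3 2 isT)).
Qed.

End SubtreeHelly.

Local Open Scope ring_scope.

Lemma well_behaved_mono (T : finType) (R : realFieldType) (lam : width_measure T R)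
    (H : hypergraph T) :
  well_behaved lam -> wf_hg H ->
  forall S U : {set T}, S \subset U -> U \subset hv H -> lam H S <= lam H U.
Proof. by case=> [_ [_ [_ mono]]] wfH sSU sUH; apply: mono. Qed.

Lemma gaifman_sym (T : finType) (H : hypergraph T) : symmetric (gaifman H).
Proof.
move=> x y; rewrite /gaifman /= eq_sym; congr (_ && _).
by apply/existsP/existsP => -[e]; rewrite andbAC; exists e.
Qed.

Section Closure.

Variables (T : finType) (R : realFieldType) (lam : width_measure T R).
Variables (H : hypergraph T) (k : int).
Hypothesis lam_mono :
  forall S U : {set T}, S \subset U -> U \subset hv H -> lam H S <= lam H U.

Lemma closure_sym G : closure_seq lam H k G -> symmetric G.
Proof.
elim=> [|G1 u v _ symG1 _ x y]; first exact: gaifman_sym.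
rewrite /add_edge /= symG1 -!orbA; congr (_ || _).
by rewrite orbC; congr (_ || _); apply: andbC.
Qed.

Section Separator.

Variable S : {set T}.
Hypotheses (sSH : S \subset hv H) (lamS : lam H S <= k%:~R).

Definition avoid (G : rel T) : rel T := [rel x y | G x y && (x \notin S) && (y \notin S)].

Lemma avoid_sym G : symmetric G -> symmetric (avoid G).
Proof. by move=> symG x y; rewrite /avoid /= symG andbAC. Qed.

Lemma path_avoid G x p :
  x \notin S -> path (avoid G) x p = path G x p && ~~ has (mem S) p.
Proof.
elim: p x => [|y p IH] x xS //=; rewrite {1}/avoid /= xS andbT.
have [yS|yS] := boolP (y \in S); first by rewrite !andbF.
by rewrite /= andbT IH // andbA.
Qed.

Lemma can_add_connect_avoid G u v :
  symmetric G -> can_add lam H k G u v -> u \notin S -> v \notin S ->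
  connect (avoid G) u v.
Proof.
move=> symG [_ _ _ _ lamW] uS vS.
have /subsetPn[w /setIP[]] : ~~ (nbh G u :&: nbh G v \subset S).
  apply/negP => sWS; have := le_trans (lam_mono sWS sSH) lamS.
  by rewrite leNgt lamW.
rewrite !inE => uw vw wS.
apply: (@connect_trans _ _ w); apply: connect1; rewrite /avoid /= ?uw ?uS ?wS //.
by rewrite symG vw vS.
Qed.

Lemma closure_connect_avoid G x y :
  closure_seq lam H k G -> connect (avoid G) x y -> connect (avoid (gaifman H)) x y.
Proof.
move=> closG; elim: closG x y => [//|G1 u v closG1 IH addG1] x y cxy.
have symG1 := closure_sym closG1.
apply: IH; apply: connect_sub cxy => {}x {}y /andP[/andP[Gxy xS] yS].
case/orP: Gxy => [/orP[G1xy|/andP[/eqP ex /eqP ey]]|/andP[/eqP ex /eqP ey]]; subst.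
- by apply: connect1; rewrite /avoid /= G1xy xS yS.
- exact: can_add_connect_avoid.
rewrite (sym_connect_sym (avoid_sym symG1)).
exact: can_add_connect_avoid.
Qed.

Lemma closure_separator G A B :
  closure_seq lam H k G -> separator (gaifman H) A B S -> separator G A B S.
Proof.
move=> closG [sABS sepS]; split=> // a p aA pG lB; apply: contraT => naS.
have [aS pS] : a \notin S /\ ~~ has (mem S) p by move: naS; rewrite /= negb_or => /andP.
have lS : last a p \notin S.
  by apply: contra naS => lS; apply/hasP; exists (last a p); rewrite ?mem_last.
have /connectP[q] : connect (avoid (gaifman H)) a (last a p).
  by apply: closure_connect_avoid closG _; apply/connectP; exists p; rewrite ?path_avoid ?pG.
rewrite path_avoid // => /andP[qG qS] lq.
by have := sepS a q aA qG; rewrite -lq => /(_ lB); rewrite /= (negbTE aS) (negbTE qS).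
Qed.

End Separator.

Section TreeDecomposition.

Variables (n : nat) (tr : rel 'I_n) (bag : 'I_n -> {set T}).
Hypotheses (tdH : tree_decomposition H tr bag) (lam_bag : forall t, lam H (bag t) <= k%:~R).

Definition occ (v : T) := [set t | v \in bag t].

Definition covered (G : rel T) := forall x y, G x y -> occ x :&: occ y != set0.

Lemma occI_neq0 x y : reflect (exists t, (x \in bag t) && (y \in bag t)) (occ x :&: occ y != set0).
Proof.
by apply: (iffP (set0Pn _)) => -[t]; rewrite ?inE => xyt; exists t; rewrite ?inE.
Qed.

Lemma occ_connected v : connected_set tr (occ v).
Proof.
case: tdH => _ [_ [_ [conn_bags _]]] x y; rewrite !inE => xv yv.
have induced_occ : induced tr (occ v) =2 [rel a b | tr a b && (v \in bag a) && (v \in bag b)].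
  by move=> a b; rewrite /induced /= !inE.
by rewrite (eq_connect induced_occ) conn_bags.
Qed.

Lemma nodes_tree : [/\ irreflexive tr, symmetric tr & tree_on tr [set: 'I_n]].
Proof.
case: tdH => -[_ [tr_irr [tr_sym [tr_conn tr_arcs]]]] _; split=> //; split.
  by move=> x y _ _; rewrite (@eq_connect _ _ tr) // => a b; rewrite /induced /= !inE !andbT.
rewrite (_ : arcs tr _ = [set a | tr a.1 a.2]) ?tr_arcs ?cardsT ?card_ord //.
by apply/setP => a; rewrite !inE !andbT.
Qed.

Lemma bags_helly (I : finType) (X : I -> {set 'I_n}) :
  (forall i, connected_set tr (X i)) -> (forall i j, X i :&: X j != set0) ->
  exists t, forall i, t \in X i.
Proof.
have [tr_irr tr_sym treeT] := nodes_tree; move=> cX meetX.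
have [|t _ tX] := subtree_helly tr_irr tr_sym treeT _ (fun i => subsetT (X i)) cX meetX.
  by case: tdH => -[n_gt0 _] _; apply/set0Pn; exists (Ordinal n_gt0); rewrite inE.
by exists t.
Qed.

Lemma bag_of_pairwise_meeting (W : {set T}) :
  {in W &, forall w w', occ w :&: occ w' != set0} -> exists t, W \subset bag t.
Proof.
move=> meetW.
have [|w w'|t tW] := bags_helly (X := fun w : {w : T | w \in W} => occ (val w)).
- by move=> w; apply: occ_connected.
- exact: meetW (valP w) (valP w').
by exists t; apply/subsetP => w wW; have := tW (exist _ w wW); rewrite inE.
Qed.

Lemma common_neighbours_share_bag u v w w' :
  occ u :&: occ v = set0 ->
  occ u :&: occ w != set0 -> occ v :&: occ w != set0 ->
  occ u :&: occ w' != set0 -> occ v :&: occ w' != set0 ->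
  occ w :&: occ w' != set0.
Proof.
move=> uv0 uw vw uw' vw'; have [tr_irr tr_sym treeT] := nodes_tree.
have /set0Pn[t] : occ u :&: occ w :&: (occ v :|: occ w') != set0.
  apply: (subtree_helly3 tr_irr tr_sym treeT (subsetT _) (subsetT _) (subsetT _)) => //.
  - exact: occ_connected.
  - exact: occ_connected.
  - exact: connected_setU (@occ_connected v) (@occ_connected w') vw'.
  - by rewrite setIUr setU_eq0 negb_and uw' orbT.
  by rewrite setIUr setU_eq0 negb_and setIC vw.
rewrite !inE => /andP[/andP[tu tw] /orP[tv|tw']].
  have : t \in occ u :&: occ v by rewrite !inE tu tv.
  by rewrite uv0 inE.
by apply/set0Pn; exists t; rewrite !inE tw tw'.
Qed.

Lemma can_add_covered G u v : covered G -> can_add lam H k G u v -> occ u :&: occ v != set0.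
Proof.
move=> covG [_ _ _ _ lamW]; apply/negP => /eqP uv0.
have [t sWt] : exists t, nbh G u :&: nbh G v \subset bag t.
  apply: bag_of_pairwise_meeting => w w'; rewrite !inE => /andP[uw vw] /andP[uw' vw'].
  exact: common_neighbours_share_bag uv0 (covG _ _ uw) (covG _ _ vw) (covG _ _ uw') (covG _ _ vw').
have bag_sub : bag t \subset hv H by case: tdH => _ [].
by have := le_trans (lam_mono sWt bag_sub) (lam_bag t); rewrite leNgt lamW.
Qed.

Lemma closure_covered G : closure_seq lam H k G -> covered G.
Proof.
elim=> [x y|G1 u v _ covG1 addG1 x y].
  by case: tdH => _ [_ [_ [_ edge_bag]]] /edge_bag /occI_neq0.
case/orP=> [/orP[/covG1 //|/andP[/eqP-> /eqP->]]|/andP[/eqP-> /eqP->]].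
  exact: can_add_covered covG1 addG1.
by rewrite setIC; apply: can_add_covered covG1 addG1.
Qed.

Lemma clique_in_bag G C : covered G -> is_clique H G C -> exists t, C \subset bag t.
Proof.
move=> covG [sCH cliqueC]; apply: bag_of_pairwise_meeting => c c' cC c'C.
have [<-|cc'] := eqVneq c c'; last exact/covG/cliqueC.
have [t ct] : exists t, c \in bag t by case: tdH => _ [_ [cover _]]; apply/cover/(subsetP sCH).
by rewrite setIid; apply/set0Pn; exists t; rewrite inE.
Qed.

Lemma closure_clique_le G C :
  closure_seq lam H k G -> is_clique H G C -> lam H C <= k%:~R.
Proof.
move=> /closure_covered covG /(clique_in_bag covG)[t sCt].
have [_ [bag_sub _]] := tdH.
exact: le_trans (lam_mono sCt (bag_sub t)) (lam_bag t).
Qed.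

End TreeDecomposition.

End Closure.

Unset Implicit Arguments.

Theorem mainTheorem18 (T : finType) (R : realFieldType) (lam : width_measure T R)
    (k : int) (H : hypergraph T) :
  well_behaved lam -> wf_hg H -> lam_tw_le lam H k ->
  forall G : rel T, is_closure lam H k G ->
  (forall C : {set T}, is_clique H G C -> lam H C <= k%:~R) /\
  (forall A B S : {set T}, A \subset hv H -> B \subset hv H -> S \subset hv H ->
     separator (gaifman H) A B S -> lam H S <= k%:~R -> separator G A B S).
Proof.
move=> wbl wfH [n [tr [bag [tdH lam_bag]]]] G [closG _].
have lam_mono := well_behaved_mono wbl wfH.
split=> [C | A B S _ _ sSH sepS lamS].
  exact: (closure_clique_le lam_mono tdH lam_bag closG).
exact: (closure_separator lam_mono sSH lamS closG sepS).
Qed.
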